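(* Let $\psi \colon \operatorname{NOp}_{\alpha}(r, d) \to F(r, d + r)$ be the map sending $L$ to $F_{\alpha}(L, d + r)$. Then $\psi$ is surjective and all fibers have the same dimension.
   Context: Let $\bar C$ be an algebraically closed field of characteristic zero, $\alpha\in\bar C$, and $\partial x = x\partial+1$. $\operatorname{NOp}_\alpha(r,d)$ denotes the set of differential operators $L\in\bar C[x-\alpha][\partial]$ of order exactly $r$ and degree at most $d$ whose leading coefficient $\operatorname{lc}_\partial(L)$ does not vanish at $\alpha$. For such $L$ and $d_1\ge r$, the fundamental matrix $F_\alpha(L,d_1)$ is the $r\times(d_1+1)$ matrix whose first $r$ columns form the identity matrix $I_r$ and each of whose rows consists of the first $d_1+1$ coefficients (in powers of $x-\alpha$) of a power series solution of $L$ at $x=\alpha$. $F(r,d)$ denotes the space of all possible fundamental matrices of degree $d$ for operators of order $r$; it is isomorphic to $\mathbb{A}^{r(d+1-r)}$. *)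

From HB Require Import structures.
From mathcomp Require Import all_boot all_order all_algebra.
From mathcomp Require Import mpoly.
From Stdlib Require Import ClassicalEpsilon.
Set Implicit Arguments. Unset Strict Implicit. Unset Printing Implicit Defensive.
Import GRing.Theory.
Local Open Scope ring_scope.

(* Coordinates: t = x - alpha, so d/dx = d/dt.  An operator
     L = sum_{i<=r} p_i(t) D^i ,  deg p_i <= d
   is represented by its coefficient matrix A : 'M_(r.+1, d.+1),
   A i k = coefficient of t^k = (x-alpha)^k in p_i.
   A power series y = sum_n y n t^n is a function y : nat -> C. *)

Section Defs.
Variable C : fieldType.

(* coefficient of t^n in L(y):  sum_i sum_{k<=n} p_i[k] * (y^(i))[n-k],
   with (y^(i))[m] = (m+i)(m+i-1)...(m+1) y[m+i] = (m+i)^_i y[m+i]. *)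
Definition op_apply r d (A : 'M[C]_(r.+1, d.+1)) (y : nat -> C) (n : nat) : C :=
  \sum_(i < r.+1) \sum_(k < d.+1 | (k <= n)%N)
     A i k * ((n - k + i) ^_ i)%:R * y (n - k + i)%N.

Definition is_psol r d (A : 'M[C]_(r.+1, d.+1)) (y : nat -> C) : Prop :=
  forall n, op_apply A y n = 0.

(* NOp_alpha(r,d): order exactly r, degree <= d, lc_D(L)(alpha) <> 0.
   lc_D(L)(alpha) = p_r(t = 0) = A r 0. *)
Definition NOp r d (A : 'M[C]_(r.+1, d.+1)) : Prop := A ord_max ord0 != 0.

Definition Fspace r d1 (M : 'M[C]_(r, d1.+1)) : Prop :=
  forall (i : 'I_r) (j : 'I_d1.+1), (j < r)%N -> M i j = (i == j :> nat)%:R.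

Definition is_fundmx r d (A : 'M[C]_(r.+1, d.+1)) d1 (M : 'M[C]_(r, d1.+1)) : Prop :=
  Fspace M /\
  forall i : 'I_r, exists y, is_psol A y /\ forall j : 'I_d1.+1, M i j = y j.

(* F_alpha(L, d1) as a function (the matrix is unique when A is in NOp). *)
Definition fundmx r d (A : 'M[C]_(r.+1, d.+1)) d1 : 'M[C]_(r, d1.+1) :=
  epsilon (inhabits 0) (@is_fundmx r d A d1).

Definition mx_coords m n (A : 'M[C]_(m, n)) : 'I_(m * n) -> C :=
  fun k => mxvec A 0 k.

Definition zariski_closed m n (Z : 'M[C]_(m, n) -> Prop) : Prop :=
  exists P : {mpoly C[m * n]} -> Prop,
    forall A, Z A <-> (forall p, P p -> p.@[mx_coords A] = 0).

Definition closed_in m n (S Y : 'M[C]_(m, n) -> Prop) : Prop :=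
  exists Z, zariski_closed Z /\ forall A, Y A <-> (Z A /\ S A).

Definition irreducible_in m n (S Y : 'M[C]_(m, n) -> Prop) : Prop :=
  [/\ closed_in S Y, exists A, Y A &
      forall Y1 Y2, closed_in S Y1 -> closed_in S Y2 ->
        (forall A, Y A -> Y1 A \/ Y2 A) ->
        (forall A, Y A -> Y1 A) \/ (forall A, Y A -> Y2 A)].

Definition irr_chain m n (S : 'M[C]_(m, n) -> Prop)
    (k : nat) (Ys : nat -> 'M[C]_(m, n) -> Prop) : Prop :=
  (forall i, (i <= k)%N -> irreducible_in S (Ys i)) /\
  (forall i, (i < k)%N ->
     (forall A, Ys i A -> Ys i.+1 A) /\ exists A, Ys i.+1 A /\ ~ Ys i A).

Definition has_dim m n (S : 'M[C]_(m, n) -> Prop) (k : nat) : Prop :=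
  (exists Ys, irr_chain S k Ys) /\ ~ (exists Ys, irr_chain S k.+1 Ys).

End Defs.

From HB Require Import structures.
From mathcomp Require Import all_boot all_order all_algebra.
From mathcomp Require Import mpoly zify.
From Stdlib Require Import ClassicalEpsilon Classical.
Set Implicit Arguments. Unset Strict Implicit. Unset Printing Implicit Defensive.
Import GRing.Theory.
Local Open Scope ring_scope.

(* Put t = x - alpha.  For L in NOp_alpha(r, d), the coefficient of t^n in L(y)
   involves y_(n+r) only through lc(L)(alpha) * (n+r)^_r * y_(n+r), which is
   invertible in characteristic zero.  Hence initial data y_0, ..., y_(r-1)
   extend uniquely to a power series solution, F_alpha(L, d + r) exists, and it
   equals M iff the coefficients of t^0, ..., t^d of L applied to the rows of M
   vanish.  For fixed M these r (d + 1) linear forms in the coefficients of L,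
   together with the leading coefficient of L, form an injective, hence
   bijective, linear map [fiber_map M], and the fibre over M is the preimage of
   the fixed nonempty set [model_fiber].  So every fibre is nonempty and
   linearly isomorphic to [model_fiber], and has its dimension.
   That [model_fiber] has a dimension at all comes from a bound on irreducible
   chains in affine N-space: along a strict chain Y_0 < ... < Y_k, products
   with polynomials separating consecutive members give 'C(M + k, k)
   polynomials of degree O(M), independent modulo the ideal of Y_k, while only
   O(M^N) monomials have such degree; so k <= N. *)

Lemma expn_le_ffact a k : (a.+1 ^ k <= (a + k) ^_ k)%N.
Proof.
elim: k => [|k IH]; first by rewrite ffactn0.
by rewrite addnS ffactSS expnS leq_mul // ltnS leq_addr.
Qed.

Lemma expn_lt_binomial N E M : ((N.+1)`! * E.+1 ^ N <= M)%N ->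
  ((1 + M * E) ^ N < 'C(M + N.+1, N.+1))%N.
Proof.
move=> le_M; rewrite -(ltn_pmul2r (fact_gt0 N.+1)) bin_ffact.
apply: leq_trans (expn_le_ffact M N.+1).
have le_base : ((1 + M * E) ^ N <= (M.+1 * E.+1) ^ N)%N.
  by case: N {le_M} => // N; rewrite leq_exp2r //; nia.
apply: leq_ltn_trans (leq_mul le_base (leqnn _)) _.
rewrite expnMn -mulnA expnSr ltn_pmul2l ?expn_gt0 //.
by rewrite mulnC ltnS.
Qed.

Lemma mpoly_eq0_small_coef (R : nzRingType) (N D : nat) (p : {mpoly R[N]}) :
  (msize p <= D)%N ->
  (forall t : {ffun 'I_N -> 'I_D}, p@_[multinom (t i : nat) | i < N] = 0) ->
  p = 0.
Proof.
move=> szp small0; apply/mpolyP => mm; rewrite mcoeff0.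
have [small|/forallPn [i large]] := boolP [forall i, (mm i < D)%N].
  pose t := [ffun i => Ordinal (forallP small i)].
  have -> : mm = [multinom (t i : nat) | i < N] by apply/mnmP => i; rewrite mnmE ffunE.
  exact: small0.
apply/eqP; rewrite mcoeff_eq0; apply: msize_mdeg_ge; apply: leq_trans szp _.
rewrite mdegE (bigD1 i) //= -leqNgt in large *.
exact: leq_trans large (leq_addr _ _).
Qed.

Lemma exists_true_then_false (P : nat -> Prop) N :
  P 0%N -> ~ P N -> exists k, P k /\ ~ P k.+1.
Proof.
move=> P0 nPN; apply: NNPP => none; apply: nPN.
elim: N => // k Pk; apply: NNPP => nPk; apply: none; by exists k.
Qed.

Lemma uniform_bound k (Q : nat -> nat -> Prop) :
  (forall j e e', (e <= e')%N -> Q j e -> Q j e') ->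
  (forall j, (j < k)%N -> exists e, Q j e) ->
  exists E, forall j, (j < k)%N -> Q j E.
Proof.
move=> Qmono; elim: k => [|k IH] Qex; first by exists 0%N.
have [E1 QE1] := IH (fun j lt_jk => Qex j (ltnW lt_jk)).
have [e Qe] := Qex k (ltnSn k).
exists (maxn E1 e) => j; rewrite ltnS leq_eqVlt => /predU1P [->|lt_jk].
  exact: Qmono (leq_maxr _ _) Qe.
exact: Qmono (leq_maxl _ _) (QE1 _ lt_jk).
Qed.

Section VanishingIdeals.
Variables (C : fieldType) (m n : nat).
Implicit Types (S Y : 'M[C]_(m, n) -> Prop) (p f g : {mpoly C[m * n]}).

Definition vanish_on Y p := forall A, Y A -> p.@[mx_coords A] = 0.

Definition free_on Y k (F : nat -> {mpoly C[m * n]}) :=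
  forall c : nat -> C, vanish_on Y (\sum_(i < k) c i *: F i) ->
    forall i, (i < k)%N -> c i = 0.

Definition prime_on Y :=
  forall f g, vanish_on Y (f * g) -> vanish_on Y f \/ vanish_on Y g.

(* A free family embeds into the coefficient vectors at the D^(m n) monomials
   with all exponents below D. *)
Lemma free_on_size_bound Y k F D : free_on Y k F ->
  (forall i, (i < k)%N -> (msize (F i) <= D)%N) -> (k <= D ^ (m * n))%N.
Proof.
move=> freeF szF.
pose T := {ffun 'I_(m * n) -> 'I_D}.
pose V := \matrix_(i < k, j < #|T|) (F i)@_[multinom (enum_val j i : nat) | i < m * n].
suff /eqP rkV : row_free V by have := rank_leq_col V; rewrite rkV card_ffun !card_ord.
apply: inj_row_free => v vV0.
pose p := \sum_(i < k) v 0 i *: F i.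
have p0 : p = 0.
  apply: (@mpoly_eq0_small_coef _ _ D).
    apply: leq_trans (msize_sum _ _ _) _; apply/bigmax_leqP => i _.
    exact: leq_trans (msizeZ_le _ _) (szF _ (ltn_ord i)).
  move=> t; have /rowP/(_ (enum_rank t)) := vV0; rewrite !mxE => <-.
  rewrite raddf_sum; apply: eq_bigr => i _ /=.
  by rewrite mcoeffZ mxE enum_rankK.
apply/rowP => j; rewrite mxE.
have := freeF (fun i => oapp (v 0) 0 (insub i)) _ j (ltn_ord j); rewrite valK; apply.
move=> A _; rewrite (eq_bigr (fun i => v 0 i *: F i)) => [|i _]; last by rewrite valK.
by rewrite -/p p0 meval0.
Qed.

Lemma free_on_one Y : (exists A, Y A) -> free_on Y 1 (fun=> 1).
Proof.
move=> [A YA] c c1_0 i; rewrite ltnS leqn0 => /eqP ->.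
by have := c1_0 A YA; rewrite big_ord1 mevalZ meval1 mulr1.
Qed.

Lemma free_on_cat Y Y' f k1 F1 k2 F2 : prime_on Y' -> (forall A, Y A -> Y' A) ->
  vanish_on Y f -> ~ vanish_on Y' f -> free_on Y k1 F1 -> free_on Y' k2 F2 ->
  free_on Y' (k1 + k2) (fun i => if (i < k1)%N then F1 i else f * F2 (i - k1)%N).
Proof.
move=> primeY' subYY' Yf Y'f freeF1 freeF2 c.
rewrite big_split_ord /=.
rewrite (eq_bigr (fun i : 'I_k1 => c i *: F1 i)) => [|i _]; last by rewrite ltn_ord.
rewrite (eq_bigr (fun i : 'I_k2 => f * (c (k1 + i)%N *: F2 i))) => [|i _]; last first.
  by rewrite /= ltnNge leq_addr /= addKn scalerAr.
rewrite -mulr_sumr => vanish_sum.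
have c1_0 : forall i, (i < k1)%N -> c i = 0.
  apply: freeF1 => A YA; have := vanish_sum A (subYY' A YA).
  by rewrite mevalD mevalM (Yf A YA) mul0r addr0.
have c2_0 : forall i, (i < k2)%N -> c (k1 + i)%N = 0.
  apply: (freeF2 (fun i => c (k1 + i)%N)).
  have vanish_prod : vanish_on Y' (f * \sum_(i < k2) c (k1 + i)%N *: F2 i).
    move=> A Y'A; have := vanish_sum A Y'A.
    by rewrite [X in X + _]big1 ?add0r // => i _; rewrite c1_0 // scale0r.
  by have [/Y'f|] := primeY' _ _ vanish_prod.
move=> i; case: (ltnP i k1) => [/c1_0 //|le_k1i].
by rewrite -(subnKC le_k1i) ltn_add2l => /c2_0.
Qed.

Section ChainGrowth.
Variables (Ys : nat -> 'M[C]_(m, n) -> Prop) (k E : nat).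
Hypothesis Ys_nonempty : forall j, (j <= k)%N -> exists A, Ys j A.
Hypothesis Ys_prime : forall j, (j < k)%N -> prime_on (Ys j.+1).
Hypothesis Ys_incr : forall j, (j < k)%N -> forall A, Ys j A -> Ys j.+1 A.
Hypothesis Ys_sep : forall j, (j < k)%N ->
  exists f, [/\ vanish_on (Ys j) f, ~ vanish_on (Ys j.+1) f & (msize f < E)%N].

(* Pascal's rule: the family for (j.+1, M.+1) is the one for (j, M.+1)
   followed by f_j times the one for (j.+1, M). *)
Lemma free_on_chain_growth j M : (j <= k)%N -> exists K F,
  [/\ free_on (Ys j) K F, forall i, (i < K)%N -> (msize (F i) <= 1 + M * E)%N
    & ('C(M + j, j) <= K)%N].
Proof.
have one_family i M' : (i <= k)%N -> exists F, free_on (Ys i) 1 F /\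
    forall l, (l < 1)%N -> (msize (F l) <= 1 + M' * E)%N.
  move=> le_ik; exists (fun=> 1); split; first exact/free_on_one/Ys_nonempty.
  by move=> l _; rewrite msize1 leq_addr.
elim: j M => [|j IHj] M le_jk.
  have [F [freeF szF]] := one_family 0%N M le_jk.
  by exists 1%N, F; rewrite bin0.
elim: M => [|M IHM].
  have [F [freeF szF]] := one_family j.+1 0%N le_jk.
  by exists 1%N, F; rewrite add0n binn.
have [K1 [F1 [freeF1 szF1 le_K1]]] := IHj M.+1 (ltnW le_jk).
have [K2 [F2 [freeF2 szF2 le_K2]]] := IHM.
have [f [Yj_f Yj1_f szf]] := Ys_sep le_jk.
exists (K1 + K2)%N, (fun i => if (i < K1)%N then F1 i else f * F2 (i - K1)%N).
split; first exact: free_on_cat (Ys_prime le_jk) (Ys_incr le_jk) Yj_f Yj1_f freeF1 freeF2.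
  move=> i lt_i; case: ifPn => [/szF1 //|]; rewrite -leqNgt => le_K1i.
  have /szF2 : (i - K1 < K2)%N by rewrite ltn_subLR // -ltnS.
  by have := msizeM_le f (F2 (i - K1)%N); lia.
rewrite [(K1 + K2)%N]addnC; apply: leq_trans (leq_add le_K2 le_K1) => //.
by rewrite addSn binS addSnnS.
Qed.

End ChainGrowth.

Lemma prime_on_irreducible S Y : irreducible_in S Y -> prime_on Y.
Proof.
case=> [[Z [[P ZP] YZS]] _ irrY] f g Yfg.
have closed_zeros (h : {mpoly C[m * n]}) :
    closed_in S (fun A => Y A /\ h.@[mx_coords A] = 0).
  exists (fun A => Z A /\ h.@[mx_coords A] = 0); split.
    exists (fun p => P p \/ p = h) => A; split.
      by case=> /ZP ZA hA p [/ZA|->].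
    by move=> Ph; split; [apply/ZP => p Pp|]; apply: Ph; [left|right].
  by move=> A; rewrite YZS; split=> [[[]]|[[]]].
case: (irrY _ _ (closed_zeros f) (closed_zeros g)).
- move=> A YA; have /eqP := Yfg A YA; rewrite mevalM mulf_eq0.
  by case/orP => /eqP; [left|right].
- by move=> Yf; left => A /Yf [].
- by move=> Yg; right => A /Yg [].
Qed.

Lemma closed_in_separating S Y Y' : closed_in S Y -> closed_in S Y' ->
  (exists A, Y' A /\ ~ Y A) -> exists f, vanish_on Y f /\ ~ vanish_on Y' f.
Proof.
move=> [Z [[P ZP] YZS]] [Z' [_ Y'Z'S]] [A0 [Y'A0 nYA0]].
have SA0 : S A0 by case/Y'Z'S: Y'A0.
have [p nPp] : exists p, ~ (P p -> p.@[mx_coords A0] = 0).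
  by apply: not_all_ex_not => PA0; apply: nYA0; apply/YZS; split=> //; apply/ZP.
have [Pp pA0] := imply_to_and _ _ nPp.
exists p; split; last by move=> Y'p; apply/pA0/Y'p.
by move=> A /YZS [/ZP ZA _]; apply: ZA.
Qed.

Lemma no_long_irr_chain S Ys : ~ irr_chain S (m * n).+1 Ys.
Proof.
case=> Ys_irr Ys_strict.
pose Q j e := exists f,
  [/\ vanish_on (Ys j) f, ~ vanish_on (Ys j.+1) f & (msize f < e)%N].
have [E Ys_sep] : exists E, forall j, (j < (m * n).+1)%N -> Q j E.
  apply: uniform_bound => [j e e' le_ee' [f [Yj_f Yj1_f lt_fe]]|j lt_j].
    by exists f; split=> //; apply: leq_trans le_ee'.
  have [f [Yj_f Yj1_f]] : exists f, vanish_on (Ys j) f /\ ~ vanish_on (Ys j.+1) f.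
    apply: (@closed_in_separating S).
    - by case: (Ys_irr j (ltnW lt_j)).
    - by case: (Ys_irr j.+1 lt_j).
    - by case: (Ys_strict j lt_j).
  by exists (msize f).+1, f.
have [|||K [F [freeF szF le_K]]] := free_on_chain_growth _ _ _ Ys_sep
    (((m * n).+1)`! * E.+1 ^ (m * n)) (leqnn (m * n).+1).
- by move=> j /Ys_irr [].
- by move=> j /Ys_irr/prime_on_irreducible.
- by move=> j /Ys_strict [].
have := leq_trans le_K (free_on_size_bound freeF szF).
by rewrite leqNgt expn_lt_binomial.
Qed.

Lemma irreducible_in_point S A0 : S A0 -> irreducible_in S (fun A => A = A0).
Proof.
move=> SA0; split; last 2 first.
- by exists A0.
- by move=> Y1 Y2 _ _ /(_ A0 erefl) [Y1A0|Y2A0]; [left|right] => A ->.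
exists (fun A => A = A0); split=> [|A]; last by split=> [->|[]].
exists (fun p => exists k, p = 'X_k - (mx_coords A0 k)%:MP) => A; split.
  by move=> -> p [k ->]; rewrite mevalB mevalXU mevalC subrr.
move=> A0_zeros; apply: (can_inj mxvecK); apply/rowP => k.
have /eqP := A0_zeros _ (ex_intro _ k erefl).
by rewrite mevalB mevalXU mevalC subr_eq0 => /eqP.
Qed.

Lemma exists_has_dim S : (exists A, S A) -> exists k, has_dim S k.
Proof.
move=> [A0 SA0].
apply: (@exists_true_then_false (fun k => exists Ys, irr_chain S k Ys) (m * n).+1).
  exists (fun _ A => A = A0); split=> // i _; exact: irreducible_in_point.
by case=> Ys; apply: no_long_irr_chain.
Qed.

End VanishingIdeals.

Section LinearChange.
Variables (C : fieldType) (m n : nat).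
Implicit Types (B : 'M[C]_(m * n)) (S T Y Z : 'M[C]_(m, n) -> Prop).

Definition mxmap B (A : 'M[C]_(m, n)) : 'M[C]_(m, n) := vec_mx (mxvec A *m B).

Lemma mxmapK B : B \in unitmx -> cancel (mxmap B) (mxmap (invmx B)).
Proof. by move=> Bu A; rewrite /mxmap vec_mxK mulmxK // mxvecK. Qed.

Lemma mxmapKV B : B \in unitmx -> cancel (mxmap (invmx B)) (mxmap B).
Proof. by move=> Bu A; rewrite /mxmap vec_mxK mulmxKV // mxvecK. Qed.

Definition coord_form B (k : 'I_(m * n)) : {mpoly C[m * n]} :=
  \sum_(l < m * n) B l k *: 'X_l.

Lemma coord_form_eval B k A :
  (coord_form B k).@[mx_coords A] = mx_coords (mxmap B A) k.
Proof.
rewrite /mx_coords /mxmap vec_mxK mxE /coord_form raddf_sum /=.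
by apply: eq_bigr => l _; rewrite mevalZ mevalXU mulrC.
Qed.

Lemma zariski_closed_mxmap B Z :
  zariski_closed Z -> zariski_closed (fun A => Z (mxmap B A)).
Proof.
case=> P ZP; pose forms := [tuple coord_form B k | k < m * n].
have compE A p : (p \mPo forms).@[mx_coords A] = p.@[mx_coords (mxmap B A)].
  rewrite comp_mpoly_meval; apply: meval_eq => k.
  by rewrite tnth_mktuple coord_form_eval.
exists (fun q => exists2 p, P p & q = p \mPo forms) => A; split.
  by move=> /ZP ZBA q [p Pp ->]; rewrite compE; apply: ZBA.
by move=> PA; apply/ZP => p Pp; rewrite -compE; apply: PA; exists p.
Qed.

Lemma closed_in_mxmap B S T Y : (forall A, S A <-> T (mxmap B A)) ->
  closed_in T Y -> closed_in S (fun A => Y (mxmap B A)).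
Proof.
move=> ST [Z [ZC YZT]]; exists (fun A => Z (mxmap B A)); split.
  exact: zariski_closed_mxmap.
by move=> A; rewrite YZT ST.
Qed.

Lemma irreducible_in_mxmap B S T Y : B \in unitmx ->
  (forall A, S A <-> T (mxmap B A)) ->
  irreducible_in T Y -> irreducible_in S (fun A => Y (mxmap B A)).
Proof.
move=> Bu ST [YC [A0 YA0] irrY]; split; first exact: closed_in_mxmap ST YC.
  by exists (mxmap (invmx B) A0); rewrite mxmapKV.
have TS A : T A <-> S (mxmap (invmx B) A) by rewrite ST mxmapKV.
move=> Y1 Y2 Y1C Y2C Y12.
have [] := irrY (fun A => Y1 (mxmap (invmx B) A)) (fun A => Y2 (mxmap (invmx B) A)).
- exact: closed_in_mxmap TS Y1C.
- exact: closed_in_mxmap TS Y2C.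
- by move=> A YA; apply: Y12; rewrite mxmapKV.
- by move=> YY1; left => A /YY1; rewrite mxmapK.
- by move=> YY2; right => A /YY2; rewrite mxmapK.
Qed.

Lemma irr_chain_mxmap B S T k Ys : B \in unitmx ->
  (forall A, S A <-> T (mxmap B A)) ->
  irr_chain T k Ys -> irr_chain S k (fun i A => Ys i (mxmap B A)).
Proof.
move=> Bu ST [Ys_irr Ys_strict]; split=> [i le_ik|i lt_ik].
  exact: irreducible_in_mxmap Bu ST (Ys_irr i le_ik).
have [Ys_incr [A0 [Ys1A0 nYsA0]]] := Ys_strict i lt_ik.
by split=> [A /Ys_incr //|]; exists (mxmap (invmx B) A0); rewrite mxmapKV.
Qed.

Lemma has_dim_mxmap B S T k : B \in unitmx ->
  (forall A, S A <-> T (mxmap B A)) -> has_dim T k -> has_dim S k.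
Proof.
move=> Bu ST [[Ys chainT] no_chainT]; split.
  by exists (fun i A => Ys i (mxmap B A)); apply: irr_chain_mxmap Bu ST chainT.
move=> [Zs chainS]; apply: no_chainT.
exists (fun i A => Zs i (mxmap (invmx B) A)); apply: irr_chain_mxmap chainS.
  by rewrite unitmx_inv.
by move=> A; rewrite ST mxmapKV.
Qed.

Section LinearMap.
Variable f : {linear 'M[C]_(m, n) -> 'M[C]_(m, n)}.
Hypothesis f_inj : injective f.

Lemma lin_mx_unit : lin_mx f \in unitmx.
Proof.
rewrite -row_free_unit; apply: inj_row_free => v.
rewrite mul_rV_lin => /(congr1 vec_mx); rewrite mxvecK linear0 -(linear0 f).
by move=> /f_inj/(congr1 mxvec); rewrite vec_mxK linear0.
Qed.

Lemma mxmap_lin_mx A : mxmap (lin_mx f) A = f A.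
Proof. exact: mx_vec_lin. Qed.

Lemma linear_inj_surj A : exists A', f A' = A.
Proof.
by exists (mxmap (invmx (lin_mx f)) A); rewrite -mxmap_lin_mx mxmapKV ?lin_mx_unit.
Qed.

Lemma has_dim_linear_preimage S T k :
  (forall A, S A <-> T (f A)) -> has_dim T k -> has_dim S k.
Proof.
move=> ST; apply: has_dim_mxmap lin_mx_unit _ => A.
by rewrite mxmap_lin_mx.
Qed.

End LinearMap.

End LinearChange.

Section PowerSeriesSolutions.
Variables (C : fieldType) (r d : nat).
Implicit Types (A : 'M[C]_(r.+1, d.+1)) (y z w : nat -> C).

Lemma op_apply_local A y z n : (forall j, (j <= n + r)%N -> y j = z j) ->
  op_apply A y n = op_apply A z n.
Proof.
move=> yz; apply: eq_bigr => i _; apply: eq_bigr => k le_kn; rewrite yz //.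
by have := ltn_ord i; lia.
Qed.

Lemma op_apply_scaleDr A a y z n :
  op_apply A (fun j => a * y j + z j) n = a * op_apply A y n + op_apply A z n.
Proof.
rewrite /op_apply mulr_sumr -big_split; apply: eq_bigr => i _.
rewrite mulr_sumr -big_split; apply: eq_bigr => k _ /=.
by rewrite mulrDr !mulrA; congr (_ * _ + _); rewrite mulrC mulrA.
Qed.

Lemma op_apply_scaleDl a A A' y n :
  op_apply (a *: A + A') y n = a * op_apply A y n + op_apply A' y n.
Proof.
rewrite /op_apply mulr_sumr -big_split; apply: eq_bigr => i _.
rewrite mulr_sumr -big_split; apply: eq_bigr => k _.
by rewrite !mxE !mulrDl !mulrA.
Qed.

Definition erase_at j0 y : nat -> C := fun j => if j == j0 then 0 else y j.

Definition lead_weight A n := A ord_max ord0 * ((n + r) ^_ r)%:R.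

Lemma op_apply_delta A n :
  op_apply A (fun j => (j == n + r)%:R) n = lead_weight A n.
Proof.
rewrite /op_apply big_ord_recr /= big1 ?add0r => [|i _]; last first.
  apply: big1 => k le_kn; rewrite (_ : (_ == _) = false) ?mulr0 //.
  by apply/negbTE; have := ltn_ord i; move: le_kn; rewrite /=; lia.
rewrite (bigD1 ord0) //= big1 ?addr0 => [|k /andP [le_kn nz_k]].
  by rewrite subn0 eqxx mulr1.
rewrite (_ : (_ == _) = false) ?mulr0 //.
by apply/negbTE; move: le_kn nz_k; rewrite -val_eqE /=; lia.
Qed.

Lemma op_apply_lead A y n : op_apply A y n =
  y (n + r)%N * lead_weight A n + op_apply A (erase_at (n + r) y) n.
Proof.
rewrite -op_apply_delta -op_apply_scaleDr; apply: op_apply_local => j _.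
by rewrite /erase_at; case: eqP => [->|_]; rewrite ?mulr1 ?addr0 ?mulr0 ?add0r.
Qed.

Section CharZero.
Hypothesis charC0 : [pchar C] =i pred0.

Lemma lead_weight_neq0 A n : NOp A -> lead_weight A n != 0.
Proof.
move=> NA; rewrite mulf_neq0 //; move/pcharf0P: charC0 => ->.
by rewrite -lt0n ffact_gt0 leq_addl.
Qed.

Definition solve_step A t w : nat -> C := fun j =>
  if j == (t + r)%N then - op_apply A (erase_at (t + r) w) t / lead_weight A t
  else w j.

Lemma op_apply_solve_step A t w : NOp A -> op_apply A (solve_step A t w) t = 0.
Proof.
move=> NA; rewrite op_apply_lead {1}/solve_step eqxx divfK ?lead_weight_neq0 //.
rewrite (@op_apply_local _ _ (erase_at (t + r) w)) ?addNr // => j _.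
by rewrite /erase_at /solve_step; case: eqP.
Qed.

(* [partial_sol A z m t] keeps the coefficients of [z] below [m + r] and
   fixes coefficient [t' + r] by the equation of index [t'], for [m <= t' < t]. *)
Fixpoint partial_sol A z m t : nat -> C :=
  if t is t'.+1 then
    if (t' < m)%N then partial_sol A z m t' else solve_step A t' (partial_sol A z m t')
  else z.

Definition extend_sol A z m j := partial_sol A z m j.+1 j.

Lemma partial_sol_stable A z m s s' j : (s <= s')%N -> (j < s + r)%N ->
  partial_sol A z m s' j = partial_sol A z m s j.
Proof.
elim: s' => [|s' IH] le_ss' lt_j; first by move: le_ss'; rewrite leqn0 => /eqP ->.
move: le_ss'; rewrite leq_eqVlt => /predU1P [-> //|lt_ss'].
rewrite -IH //=; case: ifP => // _; rewrite /solve_step ifN_eq //.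
by move: lt_ss' lt_j; lia.
Qed.

Lemma partial_sol_init A z m t j : (t <= m)%N -> partial_sol A z m t j = z j.
Proof. by elim: t => // t IH le_tm /=; rewrite le_tm IH // ltnW. Qed.

Lemma extend_solE A z m s j : (j < s + r)%N ->
  extend_sol A z m j = partial_sol A z m s j.
Proof.
move=> lt_j; rewrite /extend_sol; case: (leqP j.+1 s) => le_s.
  by rewrite (partial_sol_stable _ _ _ le_s) // ltn_addr.
by rewrite (partial_sol_stable _ _ _ (ltnW le_s)).
Qed.

Lemma extend_sol_init A z m j : (j < m + r)%N -> extend_sol A z m j = z j.
Proof. by move=> lt_j; rewrite (extend_solE _ _ _ lt_j) partial_sol_init. Qed.

Lemma extend_sol_psol A z m : NOp A ->
  (forall t, (t < m)%N -> op_apply A z t = 0) -> is_psol A (extend_sol A z m).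
Proof.
move=> NA z_sol t; case: (ltnP t m) => [lt_tm|le_mt].
  rewrite -(z_sol t lt_tm); apply: op_apply_local => j le_j.
  by rewrite extend_sol_init //; move: le_j lt_tm; lia.
rewrite (@op_apply_local _ _ (partial_sol A z m t.+1)) => [|j le_j]; last first.
  by apply: extend_solE; move: le_j; lia.
by rewrite /= ltnNge le_mt op_apply_solve_step.
Qed.

Lemma psol_unique A y y' : NOp A -> is_psol A y -> is_psol A y' ->
  (forall j, (j < r)%N -> y j = y' j) -> y =1 y'.
Proof.
move=> NA y_sol y'_sol yy'.
suff yy'_below p j : (j < p + r)%N -> y j = y' j.
  by move=> j; apply: (yy'_below j.+1); rewrite ltn_addr.
elim: p j => [|p IH] j; first exact: yy'.
rewrite addSn ltnS leq_eqVlt => /predU1P [->|]; last exact: IH.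
have erase_eq : op_apply A (erase_at (p + r) y) p = op_apply A (erase_at (p + r) y') p.
  apply: op_apply_local => i le_i; rewrite /erase_at; case: eqP => // ne_i.
  by apply: IH; move: le_i ne_i; lia.
apply: (mulIf (lead_weight_neq0 p NA)); apply: (addIr (op_apply A (erase_at (p + r) y) p)).
by rewrite -[LHS]op_apply_lead erase_eq -op_apply_lead y_sol y'_sol.
Qed.

Lemma fundmx_exists A d1 : NOp A -> exists M : 'M_(r, d1.+1), is_fundmx A M.
Proof.
move=> NA; pose y (i : 'I_r) := extend_sol A (fun j => (i == j :> nat)%:R) 0.
exists (\matrix_(i, j) y i j); split=> [i j lt_jr|i].
  by rewrite mxE /y extend_sol_init.
exists (y i); split; first exact: extend_sol_psol.
by move=> j; rewrite mxE.
Qed.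

Lemma fundmx_unique A d1 (M M' : 'M_(r, d1.+1)) : NOp A -> (r <= d1.+1)%N ->
  is_fundmx A M -> is_fundmx A M' -> M = M'.
Proof.
move=> NA le_r [FM rowsM] [FM' rowsM']; apply/matrixP => i j.
have [y [y_sol My]] := rowsM i; have [y' [y'_sol M'y']] := rowsM' i.
rewrite My M'y'; apply: psol_unique NA y_sol y'_sol _ _ => j' lt_j'.
have lt_j'd1 : (j' < d1.+1)%N by apply: leq_trans lt_j' le_r.
by rewrite -(My (Ordinal lt_j'd1)) -(M'y' (Ordinal lt_j'd1)) FM ?FM'.
Qed.

Lemma fundmxP A d1 : NOp A -> is_fundmx A (fundmx A d1).
Proof. by move=> NA; apply: epsilon_spec; apply: fundmx_exists. Qed.

Definition row_series (M : 'M[C]_(r, (d + r).+1)) (i : 'I_r) j : C :=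
  if (j <= d + r)%N then M i (inord j) else 0.

Lemma row_series_init M i j : Fspace M -> (j < r)%N ->
  row_series M i j = (i == j :> nat)%:R.
Proof.
move=> FM lt_jr; have le_j : (j <= d + r)%N by rewrite ltnW // ltn_addl.
by rewrite /row_series le_j FM inordK // ltnS.
Qed.

Definition fiber_eqs M A :=
  forall (i : 'I_r) n, (n <= d)%N -> op_apply A (row_series M i) n = 0.

Lemma fundmx_eq_fiber_eqs A M : NOp A -> Fspace M ->
  fundmx A (d + r) = M <-> fiber_eqs M A.
Proof.
move=> NA FM; split=> [fundM i n le_nd|eqsM].
  have [_ /(_ i) [y [y_sol My]]] := fundmxP (d + r) NA; rewrite fundM in My.
  rewrite (@op_apply_local _ _ y) ?y_sol // => j le_j.
  have le_jdr : (j <= d + r)%N by move: le_j le_nd; lia.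
  by rewrite /row_series le_jdr My inordK.
apply: (fundmx_unique NA (leqW (leq_addl d r)) (fundmxP _ NA)).
split=> // i; exists (extend_sol A (row_series M i) d.+1); split.
  by apply: extend_sol_psol NA _ => t; apply: eqsM.
move=> j; rewrite extend_sol_init ?addSn ?ltnS ?leq_ord //.
by rewrite /row_series -ltnS ltn_ord inord_val.
Qed.

(* Rows [i < r] of [fiber_map M A] are the equations [fiber_eqs M A]; its last
   row is that of [A], i.e. the leading coefficient p_r. *)
Definition fiber_map M A : 'M[C]_(r.+1, d.+1) := \matrix_(j, n)
  oapp (fun i => op_apply A (row_series M i) n) (A j n) (insub (j : nat)).

Lemma fiber_map_is_linear M : linear (fiber_map M).
Proof.
move=> a A A'; apply/matrixP => j n; rewrite !mxE.
by case: insub => [i|] /=; rewrite ?op_apply_scaleDl ?mxE.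
Qed.

HB.instance Definition _ M :=
  GRing.isLinear.Build C _ _ _ (fiber_map M) (fiber_map_is_linear M).

Lemma fiber_map_last M A k : fiber_map M A ord_max k = A ord_max k.
Proof. by rewrite mxE insubF //= ltnn. Qed.

Lemma fiber_map_lift M A i n :
  fiber_map M A (lift ord_max i) n = op_apply A (row_series M i) n.
Proof. by rewrite mxE lift_max valK. Qed.

Definition model_fiber (B : 'M[C]_(r.+1, d.+1)) :=
  (forall (i : 'I_r) n, B (lift ord_max i) n = 0) /\ B ord_max ord0 != 0.

Lemma model_fiber_delta : model_fiber (delta_mx ord_max ord0).
Proof.
split=> [i n|]; last by rewrite mxE !eqxx oner_neq0.
by rewrite mxE eq_sym (negbTE (neq_lift _ _)).
Qed.

Lemma fiberE M A : Fspace M ->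
  (NOp A /\ fundmx A (d + r) = M) <-> model_fiber (fiber_map M A).
Proof.
move=> FM; rewrite /model_fiber fiber_map_last; split=> [[NA]|[eqs0 NA]].
  move/(fundmx_eq_fiber_eqs NA FM) => eqsM; split=> // i n.
  by rewrite fiber_map_lift eqsM // -ltnS.
split=> //; apply/(fundmx_eq_fiber_eqs NA FM) => i n le_nd.
by have := eqs0 i (Ordinal (le_nd : (n < d.+1)%N)); rewrite fiber_map_lift.
Qed.

Lemma op_apply_first_col A y (k : 'I_d.+1) :
  (forall j (k' : 'I_d.+1), (k' < k)%N -> A j k' = 0) ->
  op_apply A y k = \sum_(i < r.+1) A i k * (i`!)%:R * y i.
Proof.
move=> A0; apply: eq_bigr => i _.
rewrite (bigD1 k) //= big1 ?addr0 => [|k' /andP [le_k'k ne_k'k]].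
  by rewrite subnn add0n ffactnn.
by rewrite A0 ?mul0r // ltn_neqAle le_k'k andbT.
Qed.

Lemma fiber_map_inj M : Fspace M -> injective (fiber_map M).
Proof.
move=> FM; apply: raddf_inj => A GA0.
have last0 k : A ord_max k = 0 by rewrite -(fiber_map_last M) GA0 mxE.
apply/matrixP => j k; rewrite mxE; move: j.
have [N lt_kN] := ubnP k; elim: N k lt_kN => [//|N IH] k lt_kN j.
have left0 j' (k' : 'I_d.+1) : (k' < k)%N -> A j' k' = 0.
  by move=> lt_k'k; apply: IH; apply: leq_trans lt_k'k _.
case: (unliftP ord_max j) => [i ->|->]; last exact: last0.
have := fiber_map_lift M A i k; rewrite GA0 mxE (op_apply_first_col _ left0).
rewrite (bigD1 (lift ord_max i)) //= big1 ?addr0 => [|i' ne_i'].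
  rewrite (lift_max i : bump r i = i) row_series_init ?eqxx ?mulr1 // => /esym/eqP.
  move/pcharf0P: charC0 => natf0.
  by rewrite mulf_eq0 natf0 (gtn_eqF (fact_gt0 _)) orbF => /eqP.
case: (unliftP ord_max i') ne_i' => [i'' -> ne_i''|->]; last by rewrite last0 !mul0r.
rewrite row_series_init ?lift_max // (_ : (i == i'' :> nat) = false) ?mulr0 //.
by apply/negbTE; rewrite eq_sym val_eqE; move: ne_i''; rewrite (inj_eq lift_inj).
Qed.

End CharZero.
End PowerSeriesSolutions.

Theorem lemma20 (C : closedFieldType) (charC0 : [pchar C] =i pred0) (r d : nat) :
  let psi := fun A : 'M[C]_(r.+1, d.+1) => fundmx A (d + r) in
  (forall A, NOp A -> Fspace (psi A)) /\
  (forall M : 'M[C]_(r, (d + r).+1), Fspace M -> exists A, NOp A /\ psi A = M) /\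
  (exists k : nat, forall M : 'M[C]_(r, (d + r).+1), Fspace M ->
      has_dim (fun A => NOp A /\ psi A = M) k).
Proof.
move=> psi; split; first by move=> A /(fundmxP charC0 (d + r)) [].
split=> [M FM|].
  have [A GA] := linear_inj_surj (fiber_map_inj charC0 FM) (delta_mx ord_max ord0).
  by exists A; apply/(fiberE charC0 A FM); rewrite GA; apply: model_fiber_delta.
have [k dim_model] := exists_has_dim (ex_intro _ _ (@model_fiber_delta C r d)).
exists k => M FM.
apply: (has_dim_linear_preimage (fiber_map_inj charC0 FM) _ dim_model) => A.
exact: fiberE.
Qed.
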